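(* Let $G$ be a finitely generated group containing a finite index subgroup isomorphic to $\mathbb{Z}$. Then for every finite generating set $S$ of $G$, the metric space $(G,d_S)$ admits a bilipschitz embedding into $\mathbb{R}$.
   Context: $d_S$ is the word metric, i.e. the shortest path distance on the vertex set $G$ of the Cayley graph $\mathrm{Cay}(G,S)$ (the Cayley graph is regarded as the set of group elements, not as a 1-dimensional complex). A bilipschitz embedding is a map $f$ with $c\,d(u,v)\le |f(u)-f(v)|\le C\,d(u,v)$ for constants $0<c\le C<\infty$. *)

From Stdlib Require Import Reals ZArith List.
Import ListNotations.
Open Scope R_scope.

Record Grp := {
  carrier :> Type;
  gmul : carrier -> carrier -> carrier;
  gone : carrier;
  ginv : carrier -> carrier;
  gmul_assoc : forall x y z, gmul x (gmul y z) = gmul (gmul x y) z;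
  gmul_1l : forall x, gmul gone x = x;
  gmul_Vl : forall x, gmul (ginv x) x = gone
}.

Arguments gmul {g}.
Arguments gone {g}.
Arguments ginv {g}.

(* A letter is a generator s together with a sign: (s,true) = s, (s,false) = s^-1. *)
Definition letter_val {G : Grp} (l : G * bool) : G :=
  if snd l then fst l else ginv (fst l).

Definition word_eval {G : Grp} (w : list (G * bool)) : G :=
  fold_right (fun l acc => gmul (letter_val l) acc) gone w.

Definition word_over {G : Grp} (S : list G) (w : list (G * bool)) : Prop :=
  Forall (fun l => In (fst l) S) w.

Definition generates {G : Grp} (S : list G) : Prop :=
  forall g : G, exists w, word_over S w /\ word_eval w = g.

Definition finitely_generated (G : Grp) : Prop :=
  exists S : list G, generates S.

(* word_dist S u v n : the word-metric distance d_S(u,v) (distance in the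
   Cayley graph Cay(G,S), edges g -- g s^{±1}) equals n, i.e. n is the
   minimal length of a word w over S ∪ S^{-1} with u * w = v. *)
Definition word_dist {G : Grp} (S : list G) (u v : G) (n : nat) : Prop :=
  (exists w, word_over S w /\ length w = n /\ gmul u (word_eval w) = v) /\
  (forall w, word_over S w -> gmul u (word_eval w) = v -> (n <= length w)%nat).

(* G contains a finite-index subgroup isomorphic to Z: an injective
   homomorphism phi : Z -> G whose image has finitely many left cosets
   (represented by a finite list of coset representatives). *)
Definition virtually_Z (G : Grp) : Prop :=
  exists phi : Z -> G,
    (forall a b : Z, phi (a + b)%Z = gmul (phi a) (phi b)) /\
    (forall a b : Z, phi a = phi b -> a = b) /\
    (exists reps : list G, forall g : G,
        exists r n, In r reps /\ g = gmul r (phi n)).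

Definition bilipschitz_into_R {G : Grp} (S : list G) (f : G -> R) : Prop :=
  exists c C : R, 0 < c /\ c <= C /\
    forall (u v : G) (n : nat), word_dist S u v n ->
      c * INR n <= Rabs (f u - f v) <= C * INR n.

(* Let phi : Z -> G be an injective homomorphism with finite index image and
   let T be a finite list of right coset representatives, so that every
   g : G is written g = phi (height g) * t_(idx g) with t_(idx g) in T.  The
   embedding is the mixed-radix coordinate
       coord g = |T| * height g + idx g,
   which is injective and satisfies |height u - height v| <= |coord u - coord v|.
   - Upper bound: right multiplication by a generator changes height by at
     most a constant B, because phi (height difference) then lies in a finite
     set of elements and phi is injective; so coord is Lipschitz along words.
   - Lower bound: u and v are joined by a word spelling
     t_u^-1 * phi (height v - height u) * t_v, of length
     O(|height u - height v| + 1) = O(|coord u - coord v|) for u <> v. *)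

From Stdlib Require Import Reals ZArith List Lia Lra ClassicalEpsilon.
Import ListNotations.

Lemma gmul_Vr (G : Grp) (x : G) : gmul x (ginv x) = gone.
Proof.
  assert (Hidem : gmul (gmul x (ginv x)) (gmul x (ginv x)) = gmul x (ginv x)).
  { rewrite <- gmul_assoc, (gmul_assoc _ (ginv x) x (ginv x)), gmul_Vl, gmul_1l.
    reflexivity. }
  set (y := gmul x (ginv x)) in *.
  transitivity (gmul (gmul (ginv y) y) y).
  - rewrite gmul_Vl, gmul_1l. reflexivity.
  - rewrite <- gmul_assoc, Hidem. apply gmul_Vl.
Qed.

Lemma gmul_1r (G : Grp) (x : G) : gmul x gone = x.
Proof. rewrite <- (gmul_Vl _ x), gmul_assoc, gmul_Vr, gmul_1l. reflexivity. Qed.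

Lemma inv_unique (G : Grp) (a b : G) : gmul a b = gone -> b = ginv a.
Proof.
  intro H.
  rewrite <- (gmul_1l _ b), <- (gmul_Vl _ a), <- gmul_assoc, H, gmul_1r.
  reflexivity.
Qed.

Lemma ginv_mul (G : Grp) (a b : G) : ginv (gmul a b) = gmul (ginv b) (ginv a).
Proof.
  symmetry. apply inv_unique.
  rewrite <- gmul_assoc, (gmul_assoc _ b), gmul_Vr, gmul_1l, gmul_Vr.
  reflexivity.
Qed.

Lemma ginv_inv (G : Grp) (a : G) : ginv (ginv a) = a.
Proof. symmetry. apply inv_unique. apply gmul_Vl. Qed.

(* If g = a * t and g * x = a' * t', then a'^-1 * a = t' * x^-1 * t^-1:
   the "coset part" of a one-letter move is controlled by t, t' and x. *)
Lemma coset_shift (G : Grp) (g a a' t t' x : G) :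
  g = gmul a t -> gmul g x = gmul a' t' ->
  gmul (ginv a') a = gmul t' (gmul (ginv x) (ginv t)).
Proof.
  intros Hg Hgx.
  assert (Ha' : ginv a' = gmul t' (ginv (gmul g x))).
  { symmetry. apply inv_unique. rewrite gmul_assoc, <- Hgx. apply gmul_Vr. }
  assert (Ha : a = gmul g (ginv t)).
  { rewrite Hg, <- gmul_assoc, gmul_Vr, gmul_1r. reflexivity. }
  rewrite Ha', Ha, ginv_mul, <- !gmul_assoc, (gmul_assoc _ (ginv g) g), gmul_Vl, gmul_1l.
  reflexivity.
Qed.

Section HomFromZ.
Variables (G : Grp) (phi : Z -> G).
Hypothesis phi_hom : forall a b, phi (a + b)%Z = gmul (phi a) (phi b).

Lemma hom_zero : phi 0%Z = gone.
Proof.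
  assert (H : gmul (phi 0%Z) (phi 0%Z) = gmul (phi 0%Z) gone)
    by (rewrite <- phi_hom, gmul_1r; reflexivity).
  apply (f_equal (gmul (ginv (phi 0%Z)))) in H.
  rewrite !gmul_assoc, gmul_Vl, !gmul_1l in H. exact H.
Qed.

Lemma hom_opp (a : Z) : phi (- a)%Z = ginv (phi a).
Proof. apply inv_unique. rewrite <- phi_hom, Z.add_opp_diag_r. apply hom_zero. Qed.

End HomFromZ.

Lemma injective_preimage_bounded (G : Type) (phi : Z -> G)
    (phi_inj : forall a b, phi a = phi b -> a = b) (Y : list G) :
  exists B, (0 <= B)%Z /\ forall k, In (phi k) Y -> (Z.abs k <= B)%Z.
Proof.
  induction Y as [|y Y [B [HB HY]]].
  - exists 0%Z. split; [lia | intros k []].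
  - destruct (excluded_middle_informative (exists k0, phi k0 = y)) as [[k0 Hk0] | Hno].
    + exists (Z.max B (Z.abs k0)). split; [lia |].
      intros k [Hk | Hk].
      * rewrite <- Hk0 in Hk. apply phi_inj in Hk. subst. lia.
      * specialize (HY k Hk). lia.
    + exists B. split; [exact HB |].
      intros k [Hk | Hk]; [exfalso; apply Hno; eauto | auto].
Qed.

Lemma word_eval_app (G : Grp) (w1 w2 : list (G * bool)) :
  word_eval (w1 ++ w2) = gmul (word_eval w1) (word_eval w2).
Proof.
  induction w1 as [|l w1 IH]; simpl.
  - now rewrite gmul_1l.
  - rewrite IH. apply gmul_assoc.
Qed.

Lemma generates_uniform_length (G : Grp) (S : list G) (HS : generates S)
    (X : list G) :
  exists L, (1 <= L)%nat /\ forall x, In x X ->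
    exists w, word_over S w /\ (length w <= L)%nat /\ word_eval w = x.
Proof.
  induction X as [|x X [L [HL HX]]].
  - exists 1%nat. split; [lia | intros x []].
  - destruct (HS x) as [w [Hw Hwe]].
    exists (Nat.max L (length w)). split; [lia |].
    intros y [<- | Hy].
    + exists w. repeat split; auto; lia.
    + destruct (HX y Hy) as [w' [? [? ?]]]. exists w'. repeat split; auto; lia.
Qed.

Lemma hom_word_length (G : Grp) (S : list G) (phi : Z -> G)
    (phi_hom : forall a b, phi (a + b)%Z = gmul (phi a) (phi b)) (L : nat) :
  (forall e, e = 1%Z \/ e = (-1)%Z ->
     exists w, word_over S w /\ (length w <= L)%nat /\ word_eval w = phi e) ->
  forall k, exists w, word_over S w /\
    (Z.of_nat (length w) <= Z.of_nat L * Z.abs k)%Z /\ word_eval w = phi k.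
Proof.
  intros Hunit k.
  set (e := if Z_le_gt_dec 0 k then 1%Z else (-1)%Z).
  assert (He : e = 1%Z \/ e = (-1)%Z) by (unfold e; destruct Z_le_gt_dec; auto).
  assert (Hk : k = (e * Z.of_nat (Z.abs_nat k))%Z)
    by (unfold e; destruct Z_le_gt_dec; lia).
  destruct (Hunit e He) as [we [Hwe [Hlen Heval]]].
  assert (Hpow : forall m : nat, exists w, word_over S w /\
            (length w <= L * m)%nat /\ word_eval w = phi (e * Z.of_nat m)%Z).
  { induction m as [|m [w [Hw [Hl Hev]]]].
    - exists []. repeat split; [constructor | simpl; lia |].
      rewrite Z.mul_0_r. symmetry. apply (hom_zero G phi phi_hom).
    - exists (we ++ w). repeat split.
      + apply Forall_app; auto.
      + rewrite length_app. nia.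
      + rewrite word_eval_app, Heval, Hev, <- phi_hom. f_equal. lia. }
  destruct (Hpow (Z.abs_nat k)) as [w [Hw [Hl Hev]]].
  exists w. repeat split; auto.
  - nia.
  - rewrite Hev, <- Hk. reflexivity.
Qed.

Lemma lipschitz_along_words (G : Grp) (S : list G) (F : G -> Z) (M : Z) :
  (forall g l, In (fst l) S -> (Z.abs (F g - F (gmul g (letter_val l))) <= M)%Z) ->
  forall w, word_over S w -> forall u,
    (Z.abs (F u - F (gmul u (word_eval w))) <= M * Z.of_nat (length w))%Z.
Proof.
  intros Hstep w. induction w as [|l w IH]; intros Hw u.
  - simpl. rewrite gmul_1r. lia.
  - inversion Hw as [|? ? Hl Hw']; subst.
    change (word_eval (l :: w)) with (gmul (letter_val l) (word_eval w)).
    change (length (l :: w)) with (Datatypes.S (length w)).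
    rewrite gmul_assoc, Nat2Z.inj_succ, Z.mul_succ_r.
    specialize (IH Hw' (gmul u (letter_val l))).
    specialize (Hstep u l Hl).
    lia.
Qed.

Lemma word_dist_refl (G : Grp) (S : list G) (u : G) (n : nat) :
  word_dist S u u n -> n = 0%nat.
Proof.
  intros [_ Hmin].
  specialize (Hmin [] (Forall_nil _)). simpl in Hmin.
  rewrite gmul_1r in Hmin. specialize (Hmin eq_refl). lia.
Qed.

Lemma mixed_radix_separation (K n n' i i' : Z) :
  (0 <= i < K)%Z -> (0 <= i' < K)%Z -> (n, i) <> (n', i') ->
  (1 <= Z.abs (K * n + i - (K * n' + i')))%Z /\
  (Z.abs (n - n') <= Z.abs (K * n + i - (K * n' + i')))%Z.
Proof.
  intros Hi Hi' Hne.
  destruct (Z.eq_dec n n') as [<- | Hn].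
  - assert (i <> i') by (intro; subst; auto). lia.
  - replace (K * n + i - (K * n' + i'))%Z with (K * (n - n') + (i - i'))%Z by ring.
    set (d := (n - n')%Z).
    assert (Hd : (1 <= d \/ d <= -1)%Z) by lia.
    destruct Hd.
    + assert (0 <= (K - 1) * (d - 1))%Z by (apply Z.mul_nonneg_nonneg; lia). nia.
    + assert (0 <= (K - 1) * (- d - 1))%Z by (apply Z.mul_nonneg_nonneg; lia). nia.
Qed.

Lemma bilipschitz_of_Z_bounds (G : Grp) (S : list G) (F : G -> Z) (a C : Z) :
  (1 <= a)%Z -> (1 <= C)%Z ->
  (forall u v n, word_dist S u v n ->
     (Z.of_nat n <= a * Z.abs (F u - F v))%Z /\
     (Z.abs (F u - F v) <= C * Z.of_nat n)%Z) ->
  bilipschitz_into_R S (fun g => IZR (F g)).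
Proof.
  intros Ha HC Hbounds.
  assert (Ha_pos : (0 < IZR a)%R) by (apply IZR_lt; lia).
  assert (HC1 : (1 <= IZR C)%R) by (apply IZR_le; lia).
  exists (/ IZR a)%R, (IZR C). split; [|split].
  - apply Rinv_0_lt_compat. exact Ha_pos.
  - apply Rle_trans with 1%R; auto.
    rewrite <- Rinv_1. apply Rinv_le_contravar; [lra | apply IZR_le; lia].
  - intros u v n Hd. destruct (Hbounds u v n Hd) as [Hlo Hup].
    rewrite INR_IZR_INZ, <- minus_IZR, <- abs_IZR. split.
    + apply IZR_le in Hlo. rewrite mult_IZR in Hlo.
      apply Rmult_le_reg_l with (IZR a); auto.
      rewrite <- Rmult_assoc, Rinv_r by lra. lra.
    + rewrite <- mult_IZR. apply IZR_le. exact Hup.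
Qed.

Section CosetCoordinate.
Variables (G : Grp) (S : list G) (phi : Z -> G) (T : list G).
Variables (height : G -> Z) (idx : G -> nat).
Hypothesis phi_hom : forall a b, phi (a + b)%Z = gmul (phi a) (phi b).
Hypothesis phi_inj : forall a b, phi a = phi b -> a = b.
Hypothesis S_generates : generates S.
Hypothesis idx_lt : forall g, (idx g < length T)%nat.
Hypothesis decomp : forall g, g = gmul (phi (height g)) (nth (idx g) T gone).

Let K : Z := Z.of_nat (length T).
Let rep (g : G) : G := nth (idx g) T gone.

Definition coord (g : G) : Z := (K * height g + Z.of_nat (idx g))%Z.

Lemma rep_in (g : G) : In (rep g) T.
Proof. apply nth_In, idx_lt. Qed.

Lemma coord_separates (u v : G) : u <> v ->
  (1 <= Z.abs (coord u - coord v))%Z /\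
  (Z.abs (height u - height v) <= Z.abs (coord u - coord v))%Z.
Proof.
  intro Huv. apply mixed_radix_separation.
  - specialize (idx_lt u). unfold K. lia.
  - specialize (idx_lt v). unfold K. lia.
  - intro Heq. injection Heq as Hh Hi. apply Nat2Z.inj in Hi.
    apply Huv. rewrite (decomp u), (decomp v), Hh, Hi. reflexivity.
Qed.

(* One generator moves the height by a bounded amount: phi of the height
   difference lies in the finite set {t' * x^-1 * t^-1}. *)
Lemma height_step_bounded :
  exists B, (0 <= B)%Z /\ forall g l, In (fst l) S ->
    (Z.abs (height g - height (gmul g (letter_val l))) <= B)%Z.
Proof.
  set (Y := flat_map (fun t => flat_map (fun t' => flat_map (fun s =>
              [gmul t' (gmul (ginv s) (ginv t)); gmul t' (gmul s (ginv t))]) S) T) T).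
  destruct (injective_preimage_bounded G phi phi_inj Y) as [B [HB HY]].
  exists B. split; [exact HB |].
  intros g l Hl. apply HY.
  set (g' := gmul g (letter_val l)).
  assert (Hshift : phi (height g - height g')%Z
                   = gmul (rep g') (gmul (ginv (letter_val l)) (ginv (rep g)))).
  { rewrite <- (coset_shift G g (phi (height g)) (phi (height g')) (rep g) (rep g')
                  (letter_val l) (decomp g) (decomp g')).
    rewrite <- (hom_opp G phi phi_hom), <- phi_hom. f_equal. lia. }
  rewrite Hshift. unfold Y.
  apply in_flat_map. exists (rep g). split; [apply rep_in |].
  apply in_flat_map. exists (rep g'). split; [apply rep_in |].
  apply in_flat_map. exists (fst l). split; [exact Hl |].
  destruct l as [s [|]]; unfold letter_val; simpl; [auto | rewrite ginv_inv; auto].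
Qed.

Lemma coord_lipschitz :
  exists C, (1 <= C)%Z /\ forall u v n, word_dist S u v n ->
    (Z.abs (coord u - coord v) <= C * Z.of_nat n)%Z.
Proof.
  destruct height_step_bounded as [B [HB Hstep]].
  assert (HK : (0 <= K)%Z) by (unfold K; lia).
  assert (Hcoord_step : forall g l, In (fst l) S ->
            (Z.abs (coord g - coord (gmul g (letter_val l))) <= K * B + K)%Z).
  { intros g l Hl. specialize (Hstep g l Hl).
    unfold coord.
    pose proof (idx_lt g). pose proof (idx_lt (gmul g (letter_val l))).
    set (dh := (height g - height (gmul g (letter_val l)))%Z) in *.
    assert (Z.abs (K * dh) <= K * B)%Z
      by (rewrite Z.abs_mul, (Z.abs_eq K) by lia; apply Z.mul_le_mono_nonneg_l; lia).
    unfold dh, K in *. lia. }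
  exists (K * B + K + 1)%Z. split; [nia |].
  intros u v n [[w [Hw [Hlen Hev]]] _].
  pose proof (lipschitz_along_words G S coord _ Hcoord_step w Hw u) as Hwalk.
  rewrite Hev, Hlen in Hwalk. lia.
Qed.

Lemma short_path_between :
  exists L, (1 <= L)%nat /\ forall u v, exists w,
    word_over S w /\ gmul u (word_eval w) = v /\
    (Z.of_nat (length w) <= Z.of_nat L * Z.abs (height u - height v) + 2 * Z.of_nat L)%Z.
Proof.
  destruct (generates_uniform_length G S S_generates
              (map ginv T ++ T ++ [phi 1%Z; phi (-1)%Z])) as [L [HL1 HL]].
  assert (Hpow := hom_word_length G S phi phi_hom L
                    (fun e He => HL (phi e) ltac:(rewrite !in_app_iff; simpl;
                                                  destruct He as [-> | ->]; auto))).
  exists L. split; [exact HL1 |]. intros u v.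
  destruct (HL (ginv (rep u)) ltac:(apply in_app_iff; left; apply in_map, rep_in))
    as [w1 [Hw1 [Hl1 He1]]].
  destruct (HL (rep v) ltac:(rewrite !in_app_iff; right; left; apply rep_in))
    as [w3 [Hw3 [Hl3 He3]]].
  destruct (Hpow (height v - height u)%Z) as [w2 [Hw2 [Hl2 He2]]].
  exists (w1 ++ w2 ++ w3). repeat split.
  - apply Forall_app. split; [exact Hw1 | apply Forall_app; split; assumption].
  - pose proof (decomp u) as Hu. pose proof (decomp v) as Hv.
    fold (rep u) in Hu. fold (rep v) in Hv.
    rewrite !word_eval_app, He1, He2, He3.
    set (tu := rep u) in *. set (hu := height u) in *. set (hv := height v) in *.
    rewrite Hu at 1. rewrite Hv at 2.
    rewrite <- !gmul_assoc, (gmul_assoc _ tu), gmul_Vr, gmul_1l, gmul_assoc, <- phi_hom.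
    replace (hu + (hv - hu))%Z with hv by lia. reflexivity.
  - rewrite !length_app.
    replace (Z.abs (height v - height u)) with (Z.abs (height u - height v)) in Hl2 by lia.
    lia.
Qed.

Lemma coord_colipschitz :
  exists a, (1 <= a)%Z /\ forall u v n, word_dist S u v n ->
    (Z.of_nat n <= a * Z.abs (coord u - coord v))%Z.
Proof.
  destruct short_path_between as [L [HL1 Hpath]].
  exists (3 * Z.of_nat L)%Z. split; [lia |].
  intros u v n Hd.
  destruct (excluded_middle_informative (u = v)) as [<- | Huv].
  - rewrite (word_dist_refl G S u n Hd). lia.
  - destruct (Hpath u v) as [w [Hw [Hwe Hwl]]].
    destruct Hd as [_ Hmin]. specialize (Hmin w Hw Hwe).
    destruct (coord_separates u v Huv) as [Hone Hheight].
    assert (Z.of_nat L * Z.abs (height u - height v)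
              <= Z.of_nat L * Z.abs (coord u - coord v))%Z
      by (apply Z.mul_le_mono_nonneg_l; lia).
    assert (Z.of_nat L * 1 <= Z.of_nat L * Z.abs (coord u - coord v))%Z
      by (apply Z.mul_le_mono_nonneg_l; lia).
    lia.
Qed.

Theorem coord_bilipschitz : bilipschitz_into_R S (fun g => IZR (coord g)).
Proof.
  destruct coord_colipschitz as [a [Ha Hlo]].
  destruct coord_lipschitz as [C [HC Hup]].
  apply (bilipschitz_of_Z_bounds G S coord a C Ha HC).
  intros u v n Hd. split; [apply Hlo | apply Hup]; exact Hd.
Qed.

End CosetCoordinate.

Theorem propositionP (G : Grp) (Hfg : finitely_generated G)
  (HvZ : virtually_Z G) :
  forall S : list G, generates S ->
    exists f : G -> R, bilipschitz_into_R S f.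
Proof.
  intros S HS.
  destruct HvZ as [phi [Hhom [Hinj [reps Hreps]]]].
  (* Writing g^-1 = r * phi m with r a left coset representative gives
     g = phi (-m) * r^-1: the inverted representatives decompose G. *)
  set (T := map ginv reps).
  assert (Hdecomp : forall g : G, exists p : Z * nat,
            (snd p < length T)%nat /\ g = gmul (phi (fst p)) (nth (snd p) T gone)).
  { intro g. destruct (Hreps (ginv g)) as [r [m [Hr Hg]]].
    destruct (In_nth T (ginv r) gone (in_map _ _ _ Hr)) as [i [Hi Hnth]].
    exists ((- m)%Z, i). split; [exact Hi |]. simpl.
    rewrite Hnth, (hom_opp G phi Hhom), <- ginv_mul, <- Hg, ginv_inv.
    reflexivity. }
  destruct (choice _ Hdecomp) as [dec Hdec].
  exists (fun g => IZR (coord G T (fun g => fst (dec g)) (fun g => snd (dec g)) g)).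
  apply (coord_bilipschitz G S phi T); auto; intro g; apply Hdec.
Qed.
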